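(* For a positive integer $m$ let $M=\lfloor\frac{m-1}{2}\rfloor$ and define $$\widetilde{f_{m,1}}(z)=(-1)^M\int_0^z\frac{y^{2M+2}}{1+y^2}\,dy\qquad\big(z\in\mathbb{C}\setminus([i,i\infty)\cup[-i,-i\infty))\big),$$ the integral taken along the line segment from $0$ to $z$. As $m\to\infty$ the following estimates hold, uniformly in $z$ and $t$: (i) $\widetilde{f_{m,1}}(z)=O(2^{-m})$ for $|z|\le\frac12$; (ii) $\widetilde{f_{m,1}}(it)=O\big(e^{-\frac12\sqrt m}\frac{1}{\sqrt m}\big)$ for $-1+\frac1{\sqrt m}\le t\le1-\frac1{\sqrt m}$; (iii) for $1-\frac1{\sqrt m}\le t\le 1-\frac1m$, $$\widetilde{f_{m,1}}(it)=\frac{1}{2i}\int_{m(1-t)}^\infty\frac{e^{-\zeta}}{\zeta}\,d\zeta+O\!\left(\frac{\ln m}{m}\right)=O(1),$$ and also $\widetilde{f_{m,1}}(-it)=O(1)$. *)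

From Stdlib Require Import Reals.
From Coquelicot Require Import Coquelicot.
Open Scope R_scope.

Definition bigM (m : nat) : nat := Nat.div (m - 1) 2.

Fixpoint cpow (z : Complex.C) (n : nat) : Complex.C :=
  match n with
  | O => RtoC 1
  | S k => Cmult z (cpow z k)
  end.

Definition integrand (m : nat) (y : Complex.C) : Complex.C :=
  Cdiv (cpow y (2 * bigM m + 2)) (Cplus (RtoC 1) (Cmult y y)).

(* f~_{m,1}(z) = (-1)^M * int_0^z y^(2M+2)/(1+y^2) dy along the segment [0,z],
   parametrized y = s z, s in [0,1], dy = z ds. *)
Definition ftilde (m : nat) (z : Complex.C) : Complex.C :=
  Cmult (RtoC ((-1) ^ bigM m))
    (@RInt C_R_CompleteNormedModule
       (fun s : R => Cmult z (integrand m (Cmult (RtoC s) z))) 0 1).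

Definition expint (a : R) : R :=
  RInt_gen (fun x : R => exp (- x) / x) (at_point a) (Rbar_locally p_infty).

Definition iR (t : R) : Complex.C := (0, t)%R.

(* For |z| < 1 the integrand is bounded on the segment [0, z] by
   |z|^(2M+2) / (1 - |z|^2), and 2M+2 >= m; this gives (i) and (ii).
   On the imaginary axis f(it) = -i int_0^t w^(2M+2) / (1 - w^2) dw, a real
   integral that is odd in t.  The substitution w = 1 - y/m turns it into an
   integral over [m(1-t), m] whose integrand differs from e^(-y) / (2y) by at
   most (2 + y) e^(-y) / m, because (1-u)^n lies between
   (1-u)(1 - m u^2) e^(-mu) and e^(-mu) when m <= n <= m+1.  Hence f(it) equals
   E1(m(1-t)) / (2i) up to O(1/m), and E1 <= 1 on [1, oo) bounds f(+-it). *)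

From Stdlib Require Import Reals Lia Lra Classical.
From Coquelicot Require Import Coquelicot.
Open Scope R_scope.
Set Bullet Behavior "Strict Subproofs".

Lemma pow_le_pow_le_1 (x : R) (a b : nat) : 0 <= x <= 1 -> (a <= b)%nat -> x ^ b <= x ^ a.
Proof.
  intros Hx Hab. replace b with (a + (b - a))%nat by lia. rewrite pow_add.
  pose proof (pow_le x a ltac:(lra)). pose proof (pow_le x (b - a) ltac:(lra)).
  pose proof (pow_incr x 1 (b - a) ltac:(lra)). rewrite pow1 in *. nra.
Qed.

Lemma pow_exp (x : R) (n : nat) : exp x ^ n = exp (INR n * x).
Proof.
  induction n as [|n IH]; simpl pow.
  - rewrite Rmult_0_l, exp_0. reflexivity.
  - rewrite IH, S_INR, <- exp_plus. f_equal. ring.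
Qed.

Lemma pow_1_minus_le_exp (u : R) (k : nat) : u <= 1 -> (1 - u) ^ k <= exp (- (INR k * u)).
Proof.
  intros Hu. replace (- (INR k * u)) with (INR k * - u) by ring. rewrite <- pow_exp.
  apply pow_incr. pose proof (exp_ineq1_le (- u)). lra.
Qed.

Lemma bernoulli_ineq (x : R) (k : nat) : x <= 1 -> 1 - INR k * x <= (1 - x) ^ k.
Proof.
  intros Hx. induction k as [|k IH]; simpl pow.
  - simpl. lra.
  - rewrite S_INR. pose proof (pos_INR k).
    assert (0 <= (1 - x) * ((1 - x) ^ k - (1 - INR k * x))) by (apply Rmult_le_pos; lra).
    assert (0 <= INR k * (x * x)) by (apply Rmult_le_pos; nra).
    nra.
Qed.

Lemma exp_mul_le_pow_1_minus (u : R) (k : nat) : 0 <= u <= 1 ->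
  exp (- (INR k * u)) * (1 - INR k * u ^ 2) <= (1 - u) ^ k.
Proof.
  intros Hu.
  assert (Hstep : exp (- u) * (1 - u ^ 2) <= 1 - u).
  { pose proof (exp_ineq1_le u). pose proof (exp_pos (- u)).
    replace (1 - u) with (exp (- u) * exp u * (1 - u))
      by (rewrite <- exp_plus, Rplus_opp_l, exp_0; ring).
    replace (1 - u ^ 2) with ((1 + u) * (1 - u)) by ring.
    rewrite (Rmult_assoc (exp (- u)) (exp u)). apply Rmult_le_compat_l. lra.
    apply Rmult_le_compat_r; lra. }
  replace (- (INR k * u)) with (INR k * - u) by ring.
  rewrite <- pow_exp. apply Rle_trans with ((exp (- u) * (1 - u ^ 2)) ^ k).
  - rewrite Rpow_mult_distr. apply Rmult_le_compat_l. apply pow_le, Rlt_le, exp_pos.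
    apply bernoulli_ineq. simpl. nra.
  - apply pow_incr. split; [| exact Hstep].
    apply Rmult_le_pos. apply Rlt_le, exp_pos. simpl. nra.
Qed.

Lemma mul_exp_neg_le (x : R) : 0 < x -> x * exp (- x) <= 16 * (exp (- / 2 * x) / x).
Proof.
  intros Hx.
  assert (Hq : x / 4 <= exp (x / 4)) by (pose proof (exp_ineq1_le (x / 4)); lra).
  assert (E : exp (- / 2 * x) = exp (- x) * (exp (x / 4) * exp (x / 4))).
  { rewrite <- !exp_plus. f_equal. field. }
  rewrite E. pose proof (exp_pos (- x)).
  assert (x / 4 * (x / 4) <= exp (x / 4) * exp (x / 4))
    by (apply Rmult_le_compat; lra).
  apply Rmult_le_reg_r with x. exact Hx.
  replace (16 * (exp (- x) * (exp (x / 4) * exp (x / 4)) / x) * x)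
    with (exp (- x) * (16 * (exp (x / 4) * exp (x / 4)))) by (field; lra).
  nra.
Qed.

Lemma three_plus_mul_exp_le (a : R) : 0 <= a -> (3 + a) * exp (- a) <= 3.
Proof.
  intros Ha. pose proof (exp_ineq1_le a). pose proof (exp_pos (- a)).
  replace 3 with (3 * (exp a * exp (- a))) at 2
    by (rewrite <- exp_plus, Rplus_opp_r, exp_0; ring).
  rewrite <- Rmult_assoc. apply Rmult_le_compat_r; lra.
Qed.

Lemma sqr_mul_lt_1 (s t : R) : 0 <= s <= 1 -> -1 < t < 1 -> (s * t) ^ 2 < 1.
Proof.
  intros Hs Ht. assert (t * t < 1) by nra. assert (0 <= s * s <= 1) by nra.
  assert (s * s * (t * t) <= t * t) by nra. simpl. nra.
Qed.

Lemma continuous_C_components {U : UniformSpace} (f : U -> C) (x : U) :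
  continuous (fun y => fst (f y)) x -> continuous (fun y => snd (f y)) x ->
  continuous f x.
Proof.
  intros H1 H2 P [eps HP].
  assert (B1 := H1 _ (locally_ball _ eps)). assert (B2 := H2 _ (locally_ball _ eps)).
  unfold filtermap in *.
  generalize (filter_and _ _ B1 B2). apply filter_imp.
  intros y Hy. apply HP. exact Hy.
Qed.

Lemma continuous_C_fst {U : UniformSpace} (f : U -> C) (x : U) :
  continuous f x -> continuous (fun y => fst (f y)) x.
Proof.
  intros Hf. apply (continuous_comp f fst). exact Hf.
  destruct (f x). apply continuous_fst.
Qed.

Lemma continuous_C_snd {U : UniformSpace} (f : U -> C) (x : U) :
  continuous f x -> continuous (fun y => snd (f y)) x.
Proof.
  intros Hf. apply (continuous_comp f snd). exact Hf.
  destruct (f x). apply continuous_snd.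
Qed.

Lemma continuous_Cplus {U : UniformSpace} (f g : U -> C) (x : U) :
  continuous f x -> continuous g x -> continuous (fun y => f y + g y)%C x.
Proof.
  intros Hf Hg. apply continuous_C_components; simpl.
  - apply (continuous_plus (V := R_NormedModule) (fun y => fst (f y)) (fun y => fst (g y)));
      apply continuous_C_fst; assumption.
  - apply (continuous_plus (V := R_NormedModule) (fun y => snd (f y)) (fun y => snd (g y)));
      apply continuous_C_snd; assumption.
Qed.

Lemma continuous_Cmult {U : UniformSpace} (f g : U -> C) (x : U) :
  continuous f x -> continuous g x -> continuous (fun y => f y * g y)%C x.
Proof.
  intros Hf Hg.
  assert (F1 := continuous_C_fst f x Hf). assert (F2 := continuous_C_snd f x Hf).
  assert (G1 := continuous_C_fst g x Hg). assert (G2 := continuous_C_snd g x Hg).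
  apply continuous_C_components; simpl.
  - apply (continuous_minus (V := R_NormedModule)
             (fun y => fst (f y) * fst (g y)) (fun y => snd (f y) * snd (g y)));
      apply (continuous_mult (K := R_AbsRing)); assumption.
  - apply (continuous_plus (V := R_NormedModule)
             (fun y => fst (f y) * snd (g y)) (fun y => snd (f y) * fst (g y)));
      apply (continuous_mult (K := R_AbsRing)); assumption.
Qed.

Lemma continuous_cpow {U : UniformSpace} (f : U -> C) (x : U) (n : nat) :
  continuous f x -> continuous (fun y => cpow (f y) n) x.
Proof.
  intros Hf. induction n as [|n IH]; simpl.
  - apply continuous_const.
  - apply continuous_Cmult; assumption.
Qed.

Lemma continuous_RtoC (s : R) : continuous RtoC s.
Proof.
  apply continuous_C_components; simpl.
  - apply continuous_id.
  - apply continuous_const.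
Qed.

Lemma continuous_Cinv (w : C) : w <> 0%C -> continuous Cinv w.
Proof.
  destruct w as [a b]. intros Hw.
  assert (Hd : a ^ 2 + b ^ 2 <> 0).
  { intros E. apply Hw. assert (a = 0) by nra. assert (b = 0) by nra. subst. reflexivity. }
  assert (Hsq : continuous (fun y : C => fst y ^ 2 + snd y ^ 2) (a, b)).
  { apply (continuous_plus (V := R_NormedModule) (fun y : C => fst y ^ 2) (fun y => snd y ^ 2));
      simpl; repeat apply (continuous_mult (K := R_AbsRing));
      try apply continuous_fst; try apply continuous_snd; apply continuous_const. }
  assert (Hinv : continuous (fun y : C => / (fst y ^ 2 + snd y ^ 2)) (a, b)).
  { apply (continuous_comp _ Rinv). exact Hsq.
    apply (continuous_Rinv_comp (fun r => r)). apply continuous_id. exact Hd. }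
  apply continuous_C_components; simpl.
  - apply (continuous_mult (K := R_AbsRing)).
    + apply continuous_fst.
    + exact Hinv.
  - apply (continuous_mult (K := R_AbsRing)).
    + apply (continuous_opp (V := R_NormedModule) (fun y : C => snd y)), continuous_snd.
    + exact Hinv.
Qed.

Lemma norm_C_R (z : C) : @norm R_AbsRing C_R_NormedModule z = Cmod z.
Proof.
  destruct z as [x y]. unfold Cmod. simpl.
  change (sqrt (Rabs x ^ 2 + Rabs y ^ 2) = sqrt (x ^ 2 + y ^ 2)).
  rewrite !pow2_abs. reflexivity.
Qed.

Lemma Cmod_iR (t : R) : Cmod (iR t) = Rabs t.
Proof.
  unfold Cmod, iR; simpl.
  replace (0 * (0 * 1) + t * (t * 1)) with (Rsqr t) by (unfold Rsqr; ring).
  apply sqrt_Rsqr_abs.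
Qed.

Lemma Cmod_cpow (w : C) (n : nat) : Cmod (cpow w n) = Cmod w ^ n.
Proof.
  induction n as [|n IH]; simpl.
  - apply Cmod_1.
  - rewrite Cmod_mult, IH. reflexivity.
Qed.

Lemma Cmod_1_plus_sqr_ge (w : C) : 1 - Cmod w ^ 2 <= Cmod (1 + w * w).
Proof.
  pose proof (Cmod_triangle (1 + w * w) (- (w * w))) as T.
  replace (1 + w * w + - (w * w))%C with (RtoC 1) in T by ring.
  rewrite Cmod_1, Cmod_opp, Cmod_mult in T. simpl. lra.
Qed.

Lemma one_plus_sqr_neq0 (w : C) : Cmod w < 1 -> (1 + w * w)%C <> 0%C.
Proof.
  intros Hw E. pose proof (Cmod_1_plus_sqr_ge w) as T.
  rewrite E, Cmod_0 in T. pose proof (Cmod_ge_0 w). simpl in T. nra.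
Qed.

(** * The integral along the segment *)

Definition deg (m : nat) : nat := (2 * bigM m + 2)%nat.

Lemma deg_bounds (m : nat) : (1 <= m)%nat -> (m <= deg m <= m + 1)%nat.
Proof.
  intros Hm. unfold deg, bigM.
  pose proof (Nat.div_mod (m - 1) 2 ltac:(lia)).
  pose proof (Nat.mod_upper_bound (m - 1) 2 ltac:(lia)).
  lia.
Qed.

Lemma continuous_integrand (m : nat) (w : C) :
  Cmod w < 1 -> continuous (integrand m) w.
Proof.
  intros Hw. unfold integrand, Cdiv.
  apply (continuous_Cmult (fun y => cpow y _)).
  - apply continuous_cpow, continuous_id.
  - apply (continuous_comp (fun y => 1 + y * y)%C Cinv).
    + apply continuous_Cplus. apply continuous_const.
      apply continuous_Cmult; apply continuous_id.
    + apply continuous_Cinv, one_plus_sqr_neq0, Hw.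
Qed.

Definition segment_integrand (m : nat) (z : C) (s : R) : C :=
  (z * integrand m (RtoC s * z))%C.

Lemma ex_RInt_segment_integrand (m : nat) (z : C) :
  Cmod z < 1 -> @ex_RInt C_R_NormedModule (segment_integrand m z) 0 1.
Proof.
  intros Hz. apply (@ex_RInt_continuous C_R_CompleteNormedModule).
  rewrite Rmin_left, Rmax_right by lra. intros s Hs.
  apply continuous_Cmult. apply continuous_const.
  apply (continuous_comp (fun s => RtoC s * z)%C (integrand m)).
  - apply continuous_Cmult. apply continuous_RtoC. apply continuous_const.
  - apply continuous_integrand.
    rewrite Cmod_mult, Cmod_R, Rabs_pos_eq by lra.
    pose proof (Cmod_ge_0 z). nra.
Qed.

Lemma Cmod_integrand_le (m : nat) (w : C) :
  Cmod w < 1 -> Cmod (integrand m w) <= Cmod w ^ deg m / (1 - Cmod w ^ 2).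
Proof.
  intros Hw. pose proof (Cmod_ge_0 w).
  unfold integrand, Cdiv. rewrite Cmod_mult, Cmod_cpow, Cmod_inv by now apply one_plus_sqr_neq0.
  apply Rmult_le_compat_l. apply pow_le; lra.
  apply Rinv_le_contravar. simpl; nra. apply Cmod_1_plus_sqr_ge.
Qed.

Lemma Cmod_ftilde_le (m : nat) (z : C) :
  Cmod z < 1 -> Cmod (ftilde m z) <= Cmod z ^ (deg m + 1) / (1 - Cmod z ^ 2).
Proof.
  intros Hz. pose proof (Cmod_ge_0 z) as Hz0.
  unfold ftilde. fold (segment_integrand m z).
  rewrite Cmod_mult, Cmod_R, pow_1_abs, Rmult_1_l, <- norm_C_R.
  replace (Cmod z ^ (deg m + 1) / (1 - Cmod z ^ 2))
    with ((1 - 0) * (Cmod z ^ (deg m + 1) / (1 - Cmod z ^ 2))) by ring.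
  apply (@norm_RInt_le_const C_R_NormedModule (segment_integrand m z) 0 1); [lra| |].
  - intros s Hs. rewrite norm_C_R. unfold segment_integrand.
    set (w := (RtoC s * z)%C).
    assert (Hw : Cmod w <= Cmod z).
    { unfold w. rewrite Cmod_mult, Cmod_R, Rabs_pos_eq by lra. nra. }
    pose proof (Cmod_ge_0 w).
    rewrite Cmod_mult. eapply Rle_trans.
    { apply Rmult_le_compat_l. lra. apply Cmod_integrand_le. lra. }
    rewrite pow_add, pow_1. unfold Rdiv.
    replace (Cmod z ^ deg m * Cmod z * / (1 - Cmod z ^ 2))
      with (Cmod z * (Cmod z ^ deg m * / (1 - Cmod z ^ 2))) by ring.
    apply Rmult_le_compat_l. lra.
    apply Rmult_le_compat. apply pow_le; lra.
    left. apply Rinv_0_lt_compat. simpl; nra.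
    apply pow_incr; lra.
    apply Rinv_le_contravar. simpl; nra. simpl; nra.
  - apply (@RInt_correct C_R_CompleteNormedModule), ex_RInt_segment_integrand, Hz.
Qed.

Lemma Cmod_ftilde_le_pow (m : nat) (z : C) (r : R) :
  (1 <= m)%nat -> Cmod z <= r < 1 -> Cmod (ftilde m z) <= r ^ m / (1 - r).
Proof.
  intros Hm Hr. pose proof (Cmod_ge_0 z). pose proof (deg_bounds m Hm).
  eapply Rle_trans. apply Cmod_ftilde_le. lra.
  unfold Rdiv. apply Rmult_le_compat.
  - apply pow_le; lra.
  - left. apply Rinv_0_lt_compat. simpl; nra.
  - eapply Rle_trans. apply pow_incr. split; [lra | apply Hr].
    apply pow_le_pow_le_1. lra. lia.
  - apply Rinv_le_contravar. lra. simpl; nra.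
Qed.

Lemma ftilde_small_disc : exists K : R, exists N : nat, forall m : nat, (N <= m)%nat ->
  forall z : C, Cmod z <= / 2 -> Cmod (ftilde m z) <= K * (/ 2) ^ m.
Proof.
  exists 2, 1%nat. intros m Hm z Hz.
  eapply Rle_trans. apply (Cmod_ftilde_le_pow m z (/ 2)); [lia | lra].
  right. field.
Qed.

Lemma ftilde_imag_interior : exists K : R, exists N : nat, forall m : nat, (N <= m)%nat ->
  forall t : R, -1 + / sqrt (INR m) <= t <= 1 - / sqrt (INR m) ->
    Cmod (ftilde m (iR t)) <= K * (exp (- (/ 2) * sqrt (INR m)) / sqrt (INR m)).
Proof.
  exists 16, 2%nat. intros m Hm t Ht.
  assert (Hm1 : 1 < INR m) by (apply (lt_INR 1); lia).
  set (x := sqrt (INR m)) in *.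
  assert (Hxx : x * x = INR m) by (apply sqrt_sqrt; lra).
  assert (Hx : 1 < x) by (rewrite <- sqrt_1; apply sqrt_lt_1_alt; lra).
  assert (Hx' : 0 < / x < 1).
  { split. apply Rinv_0_lt_compat; lra. rewrite <- Rinv_1. apply Rinv_lt_contravar; lra. }
  eapply Rle_trans.
  { apply (Cmod_ftilde_le_pow m (iR t) (1 - / x)). lia.
    rewrite Cmod_iR. split; [apply Rabs_le |]; lra. }
  eapply Rle_trans; [| apply mul_exp_neg_le; lra].
  replace (1 - (1 - / x)) with (/ x) by ring. unfold Rdiv. rewrite Rinv_inv.
  rewrite Rmult_comm. apply Rmult_le_compat_l. lra.
  eapply Rle_trans. apply pow_1_minus_le_exp. lra.
  right. f_equal. rewrite <- Hxx. field. lra.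
Qed.

(** * The imaginary axis *)

Definition axis_integrand (m : nat) (w : R) : R := w ^ deg m / (1 - w ^ 2).

(* [int_0^t axis_integrand m], parametrized over [0, 1] as in [ftilde]. *)
Definition axis_integral (m : nat) (t : R) : R :=
  RInt (fun s => t * axis_integrand m (s * t)) 0 1.

Lemma axis_integrand_even (m : nat) (w : R) : axis_integrand m (- w) = axis_integrand m w.
Proof.
  unfold axis_integrand, deg.
  replace (2 * bigM m + 2)%nat with (2 * (bigM m + 1))%nat by lia.
  rewrite !pow_mult. replace ((- w) ^ 2) with (w ^ 2) by ring. reflexivity.
Qed.

Lemma ex_RInt_axis (m : nat) (t : R) :
  -1 < t < 1 -> ex_RInt (fun s => t * axis_integrand m (s * t)) 0 1.
Proof.
  intros Ht. apply (@ex_RInt_continuous R_CompleteNormedModule).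
  rewrite Rmin_left, Rmax_right by lra. intros s Hs.
  apply (ex_derive_continuous (fun s => t * axis_integrand m (s * t))).
  unfold axis_integrand. auto_derive.
  pose proof (sqr_mul_lt_1 s t ltac:(lra) Ht). simpl in *. lra.
Qed.

Lemma is_RInt_imag (f : R -> R) (a b l : R) :
  is_RInt f a b l -> @is_RInt C_R_NormedModule (fun s => (0, f s) : C) a b (0, l).
Proof.
  intros Hf. apply (@is_RInt_fct_extend_pair R_NormedModule R_NormedModule); simpl.
  - pose proof (@is_RInt_const R_NormedModule a b 0) as H0.
    unfold scal in H0; simpl in H0; unfold mult in H0; simpl in H0.
    rewrite Rmult_0_r in H0. exact H0.
  - exact Hf.
Qed.

Lemma cpow_imag_even (y : R) (k : nat) : cpow (0, y) (2 * k) = ((-1) ^ k * y ^ (2 * k), 0).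
Proof.
  induction k as [|k IH].
  - simpl. unfold RtoC. f_equal; ring.
  - replace (2 * S k)%nat with (S (S (2 * k))) by lia.
    change (cpow (0, y) (S (S (2 * k)))) with ((0, y) * ((0, y) * cpow (0, y) (2 * k)))%C.
    rewrite IH. unfold Cmult; simpl. f_equal; ring.
Qed.

Lemma segment_integrand_iR (m : nat) (t s : R) : -1 < t < 1 -> 0 <= s <= 1 ->
  segment_integrand m (iR t) s = (0, (-1) ^ (bigM m + 1) * (t * axis_integrand m (s * t))).
Proof.
  intros Ht Hs.
  assert (Hd : 1 - (s * t) ^ 2 <> 0) by (pose proof (sqr_mul_lt_1 s t Hs Ht); lra).
  unfold segment_integrand, integrand, axis_integrand, deg, Cdiv.
  replace (Cmult (RtoC s) (iR t)) with ((0, s * t) : C)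
    by (unfold Cmult, RtoC, iR; simpl; f_equal; ring).
  replace (2 * bigM m + 2)%nat with (2 * (bigM m + 1))%nat by lia.
  rewrite cpow_imag_even.
  replace (Cplus (RtoC 1) (Cmult (0, s * t) (0, s * t))) with ((1 - (s * t) ^ 2, 0) : C)
    by (unfold Cplus, Cmult, RtoC; simpl; f_equal; ring).
  unfold Cinv, Cmult, iR; simpl. simpl in Hd. f_equal; field; lra.
Qed.

Lemma ftilde_iR (m : nat) (t : R) : -1 < t < 1 -> ftilde m (iR t) = iR (- axis_integral m t).
Proof.
  intros Ht. set (sgn := (-1) ^ bigM m).
  assert (HI : @is_RInt C_R_NormedModule (segment_integrand m (iR t)) 0 1
                 (0, sgn * (-1) * axis_integral m t)).
  { apply (@is_RInt_ext C_R_NormedModule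
             (fun s => (0, sgn * (-1) * (t * axis_integrand m (s * t))) : C)).
    - rewrite Rmin_left, Rmax_right by lra. intros s Hs. symmetry.
      unfold sgn. replace ((-1) ^ bigM m * -1) with ((-1) ^ (bigM m + 1))
        by (rewrite pow_add; ring).
      apply segment_integrand_iR; lra.
    - apply is_RInt_imag.
      exact (is_RInt_scal _ _ _ (sgn * (-1)) _ (RInt_correct _ _ _ (ex_RInt_axis m t Ht))). }
  unfold ftilde. fold (segment_integrand m (iR t)) sgn.
  rewrite (@is_RInt_unique C_R_CompleteNormedModule _ _ _ _ HI).
  assert (Hsgn : sgn * sgn = 1).
  { unfold sgn. rewrite <- pow_add. replace (bigM m + bigM m)%nat with (2 * bigM m)%nat by lia.
    rewrite pow_mult. replace ((-1) ^ 2) with 1 by ring. apply pow1. }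
  unfold iR, RtoC, Cmult; simpl. f_equal; [ring |].
  transitivity (- (sgn * sgn) * axis_integral m t); [ring |].
  rewrite Hsgn. ring.
Qed.

Lemma axis_integral_opp (m : nat) (t : R) :
  -1 < t < 1 -> axis_integral m (- t) = - axis_integral m t.
Proof.
  intros Ht. unfold axis_integral.
  rewrite (RInt_ext _ (fun s => opp (t * axis_integrand m (s * t)))).
  - rewrite (@RInt_opp R_CompleteNormedModule). reflexivity. apply ex_RInt_axis, Ht.
  - intros s _. replace (s * - t) with (- (s * t)) by ring.
    rewrite axis_integrand_even. unfold opp; simpl. ring.
Qed.

Lemma is_RInt_axis_rescaled (m : nat) (t : R) : 0 < INR m -> 0 < t < 1 ->
  is_RInt (fun y => axis_integrand m (1 - y / INR m) / INR m)
    (INR m * (1 - t)) (INR m) (axis_integral m t).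
Proof.
  intros Hm Ht. set (M := INR m) in *.
  set (u := - / (M * t)). set (v := / t).
  assert (H : is_RInt (fun s => t * axis_integrand m (s * t))
                (u * (M * (1 - t)) + v) (u * M + v) (opp (axis_integral m t))).
  { replace (u * (M * (1 - t)) + v) with 1 by (unfold u, v; field; lra).
    replace (u * M + v) with 0 by (unfold u, v; field; lra).
    apply (@is_RInt_swap R_NormedModule), (@RInt_correct R_CompleteNormedModule).
    apply ex_RInt_axis. lra. }
  apply (@is_RInt_comp_lin R_NormedModule), (@is_RInt_opp R_NormedModule) in H.
  rewrite opp_opp in H. revert H. apply (@is_RInt_ext R_NormedModule).
  intros y _. replace ((u * y + v) * t) with (1 - y / M) by (unfold u, v; field; lra).
  change (- (u * (t * axis_integrand m (1 - y / M))) = axis_integrand m (1 - y / M) / M).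
  unfold u. field. lra.
Qed.

(** * The exponential integral *)

Section NonnegImproperIntegral.

Variables (f : R -> R) (a : R).
Hypothesis f_int : forall b, a <= b -> ex_RInt f a b.
Hypothesis f_ge0 : forall x, a <= x -> 0 <= f x.

Lemma RInt_nonneg_incr (b c : R) : a <= b <= c -> RInt f a b <= RInt f a c.
Proof.
  intros Hbc. rewrite <- (RInt_Chasles f a b c).
  - assert (0 <= RInt f b c).
    { apply RInt_ge_0. lra. apply (ex_RInt_Chasles_2 f a); [lra | apply f_int; lra].
      intros x Hx. apply f_ge0. lra. }
    change (plus (RInt f a b) (RInt f b c)) with (RInt f a b + RInt f b c). lra.
  - apply f_int. lra.
  - apply (ex_RInt_Chasles_2 f a); [lra | apply f_int; lra].
Qed.

Lemma is_RInt_gen_lub (L : R) :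
  is_lub (fun r => exists b, a <= b /\ r = RInt f a b) L ->
  is_RInt_gen f (at_point a) (Rbar_locally p_infty) L.
Proof.
  intros [HL HLmin] P [eps HP].
  assert (Hb0 : exists b0, a <= b0 /\ L - eps < RInt f a b0).
  { apply NNPP. intros Hn.
    assert (L <= L - eps).
    { apply HLmin. intros r [b [Hb ->]]. apply Rnot_lt_le. intros Hlt. apply Hn. eauto. }
    pose proof (cond_pos eps). lra. }
  destruct Hb0 as [b0 [Hb0 Hlow]].
  apply Filter_prod with (fun x => x = a) (fun c => b0 < c).
  - reflexivity.
  - exists b0. tauto.
  - intros x c -> Hc. exists (RInt f a c). split.
    + apply (@RInt_correct R_CompleteNormedModule), f_int. lra.
    + apply HP. change (Rabs (RInt f a c - L) < eps).
      assert (RInt f a c <= L) by (apply HL; exists c; split; [lra | reflexivity]).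
      pose proof (RInt_nonneg_incr b0 c ltac:(lra)).
      apply Rabs_def1; lra.
Qed.

End NonnegImproperIntegral.

Definition expint_integrand (x : R) : R := exp (- x) / x.

Lemma ex_RInt_expint_integrand (a b : R) : 0 < a -> 0 < b -> ex_RInt expint_integrand a b.
Proof.
  intros Ha Hb. apply (@ex_RInt_continuous R_CompleteNormedModule).
  intros x Hx. assert (0 < x) by (eapply Rlt_le_trans; [| apply Hx]; apply Rmin_glb_lt; lra).
  apply (ex_derive_continuous expint_integrand). unfold expint_integrand. auto_derive. lra.
Qed.

Lemma is_RInt_exp_neg (a b : R) : is_RInt (fun x => exp (- x)) a b (exp (- a) - exp (- b)).
Proof.
  replace (exp (- a) - exp (- b)) with (minus (- exp (- b)) (- exp (- a)))
    by (unfold minus, plus, opp; simpl; ring).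
  apply (is_RInt_derive (fun x => - exp (- x))).
  - intros x _. auto_derive; [exact I | ring].
  - intros x _. apply (ex_derive_continuous (fun x => exp (- x))). auto_derive. exact I.
Qed.

Lemma RInt_expint_integrand_bounds (b c : R) :
  1 <= b <= c -> 0 <= RInt expint_integrand b c <= exp (- b) - exp (- c).
Proof.
  intros Hbc. split.
  - apply RInt_ge_0. lra. apply ex_RInt_expint_integrand; lra.
    intros x Hx. unfold expint_integrand. pose proof (exp_pos (- x)).
    apply Rdiv_le_0_compat; lra.
  - rewrite <- (is_RInt_unique _ _ _ _ (is_RInt_exp_neg b c)).
    apply RInt_le. lra. apply ex_RInt_expint_integrand; lra. eexists. apply is_RInt_exp_neg.
    intros x Hx. unfold expint_integrand. pose proof (exp_pos (- x)).
    apply Rmult_le_reg_r with x. lra. unfold Rdiv. rewrite Rmult_assoc, Rinv_l by lra. nra.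
Qed.

Lemma expint_bounds (x b : R) : 1 <= x <= b ->
  RInt expint_integrand x b <= expint x <= RInt expint_integrand x b + exp (- b).
Proof.
  intros Hxb.
  assert (Hint : forall c, x <= c -> ex_RInt expint_integrand x c)
    by (intros c Hc; apply ex_RInt_expint_integrand; lra).
  assert (Hge0 : forall y, x <= y -> 0 <= expint_integrand y).
  { intros y Hy. unfold expint_integrand. pose proof (exp_pos (- y)).
    apply Rdiv_le_0_compat; lra. }
  set (S := fun r => exists c, x <= c /\ r = RInt expint_integrand x c).
  assert (HS : bound S).
  { exists (exp (- x)). intros r [c [Hc ->]].
    pose proof (RInt_expint_integrand_bounds x c ltac:(lra)). pose proof (exp_pos (- c)). lra. }
  destruct (completeness S HS (ex_intro _ _ (ex_intro _ x (conj (Rle_refl x) eq_refl))))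
    as [L HL].
  replace (expint x) with L.
  2:{ symmetry. apply (@is_RInt_gen_unique R_CompleteNormedModule).
      apply Proper_StrongProper, at_point_filter.
      apply Proper_StrongProper, Rbar_locally_filter.
      apply is_RInt_gen_lub; assumption. }
  split.
  - apply HL. exists b. split; [lra | reflexivity].
  - apply HL. intros r [c [Hc ->]]. pose proof (exp_pos (- b)).
    destruct (Rle_or_lt c b) as [Hcb | Hbc].
    + pose proof (RInt_nonneg_incr _ _ Hint Hge0 c b ltac:(lra)). lra.
    + rewrite <- (RInt_Chasles expint_integrand x b c) by (apply ex_RInt_expint_integrand; lra).
      pose proof (RInt_expint_integrand_bounds b c ltac:(lra)). pose proof (exp_pos (- c)).
      change (plus (RInt expint_integrand x b) (RInt expint_integrand b c))
        with (RInt expint_integrand x b + RInt expint_integrand b c).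
      lra.
Qed.

Lemma expint_nonneg_le (x : R) : 1 <= x -> 0 <= expint x <= exp (- x).
Proof.
  intros Hx. pose proof (expint_bounds x x ltac:(lra)) as H.
  rewrite RInt_point in H. change (zero : R) with 0 in H. lra.
Qed.

(** * Comparison with the exponential integral *)

Lemma pow_div_sub_exp_le (m n : nat) (u : R) :
  (1 <= m)%nat -> (m <= n <= m + 1)%nat -> 0 < u <= 1 ->
  Rabs ((1 - u) ^ n / (u * (2 - u)) - exp (- (INR m * u)) / (2 * u))
    <= (2 + INR m * u) * exp (- (INR m * u)).
Proof.
  intros Hm Hn Hu.
  set (M := INR m). set (Y := exp (- (M * u))). set (X := (1 - u) ^ n).
  assert (HY : 0 < Y) by apply exp_pos.
  assert (HM : 1 <= M) by (apply (le_INR 1); lia).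
  assert (HX0 : 0 <= X) by (apply pow_le; lra).
  assert (HXup : X <= Y).
  { apply Rle_trans with ((1 - u) ^ m).
    - apply pow_le_pow_le_1; [lra | lia].
    - apply pow_1_minus_le_exp; lra. }
  assert (HXlow : (1 - u) * (Y * (1 - M * u ^ 2)) <= X).
  { apply Rle_trans with ((1 - u) ^ S m).
    - apply Rmult_le_compat_l. lra. apply exp_mul_le_pow_1_minus; lra.
    - apply pow_le_pow_le_1; [lra | lia]. }
  (* Partial fractions 1 / (u (2 - u)) = 1 / (2 u) + 1 / (2 (2 - u)) isolate the
     singular part, where X and Y nearly cancel. *)
  replace (X / (u * (2 - u)) - Y / (2 * u))
    with (X / (2 * (2 - u)) + (X - Y) / (2 * u)) by (field; lra).
  assert (HA : 0 <= X / (2 * (2 - u)) <= Y / 2).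
  { split.
    - apply Rdiv_le_0_compat; lra.
    - apply Rmult_le_reg_r with (2 * (2 - u)). lra.
      replace (X / (2 * (2 - u)) * (2 * (2 - u))) with X by (field; lra). nra. }
  assert (HB : - (Y * (1 + M * u)) / 2 <= (X - Y) / (2 * u) <= 0).
  { split; apply Rmult_le_reg_r with (2 * u); try lra;
      replace ((X - Y) / (2 * u) * (2 * u)) with (X - Y) by (field; lra).
    - assert (0 <= M * u ^ 3) by (apply Rmult_le_pos; [lra | apply pow_le; lra]).
      replace (- (Y * (1 + M * u)) / 2 * (2 * u)) with (- Y * (u + M * u ^ 2)) by field.
      nra.
    - lra. }
  assert (0 <= M * u) by nra.
  apply Rabs_le. split; nra.
Qed.

Lemma axis_integrand_approx (m : nat) (y : R) : (1 <= m)%nat -> 0 < y <= INR m ->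
  Rabs (axis_integrand m (1 - y / INR m) / INR m - expint_integrand y / 2)
    <= / INR m * ((2 + y) * exp (- y)).
Proof.
  intros Hm Hy. set (M := INR m) in *.
  assert (HM : 1 <= M) by (apply (le_INR 1); lia).
  set (u := y / M).
  assert (Hu : 0 < u <= 1).
  { unfold u. split. apply Rdiv_lt_0_compat; lra.
    apply Rmult_le_reg_r with M. lra. field_simplify; lra. }
  assert (Ey : y = M * u) by (unfold u; field; lra).
  replace (axis_integrand m (1 - u) / M - expint_integrand y / 2)
    with (/ M * ((1 - u) ^ deg m / (u * (2 - u)) - exp (- (M * u)) / (2 * u))).
  2:{ unfold axis_integrand, expint_integrand. rewrite Ey.
      replace (1 - (1 - u) ^ 2) with (u * (2 - u)) by ring. field. lra. }
  rewrite Rabs_mult, Rabs_pos_eq by (apply Rlt_le, Rinv_0_lt_compat; lra).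
  apply Rmult_le_compat_l. apply Rlt_le, Rinv_0_lt_compat. lra.
  rewrite Ey. apply pow_div_sub_exp_le; [exact Hm | apply deg_bounds, Hm | exact Hu].
Qed.

Lemma is_RInt_lin_exp (a b : R) :
  is_RInt (fun y => (2 + y) * exp (- y)) a b ((3 + a) * exp (- a) - (3 + b) * exp (- b)).
Proof.
  replace ((3 + a) * exp (- a) - (3 + b) * exp (- b))
    with (minus (- (3 + b) * exp (- b)) (- (3 + a) * exp (- a)))
    by (unfold minus, plus, opp; simpl; ring).
  apply (is_RInt_derive (fun y => - (3 + y) * exp (- y))).
  - intros y _. auto_derive; [exact I | ring].
  - intros y _. apply (ex_derive_continuous (fun y => (2 + y) * exp (- y))).
    auto_derive. exact I.
Qed.

Lemma axis_integral_sub_RInt_expint_le (m : nat) (t : R) :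
  (1 <= m)%nat -> 0 < t < 1 -> 1 <= INR m * (1 - t) ->
  Rabs (axis_integral m t - RInt expint_integrand (INR m * (1 - t)) (INR m) / 2) <= 3 / INR m.
Proof.
  intros Hm Ht Hx.
  set (M := INR m) in *. set (x := M * (1 - t)) in *. set (F := RInt expint_integrand x M).
  assert (HM : 1 <= M) by (apply (le_INR 1); lia).
  assert (HxM : x <= M) by (unfold x; nra).
  assert (Hdiff : is_RInt (fun y => axis_integrand m (1 - y / M) / M - expint_integrand y / 2)
                    x M (axis_integral m t - F / 2)).
  { apply (is_RInt_ext (fun y => minus (axis_integrand m (1 - y / M) / M)
                                       (scal (/ 2) (expint_integrand y)))).
    - intros y _. unfold minus, plus, opp, scal; simpl. unfold mult; simpl. field. lra.
    - replace (axis_integral m t - F / 2) with (minus (axis_integral m t) (scal (/ 2) F))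
        by (unfold minus, plus, opp, scal; simpl; unfold mult; simpl; field).
      apply (@is_RInt_minus R_NormedModule).
      + apply is_RInt_axis_rescaled; fold M; lra.
      + apply (@is_RInt_scal R_NormedModule), (@RInt_correct R_CompleteNormedModule).
        apply ex_RInt_expint_integrand; lra. }
  change (Rabs (axis_integral m t - F / 2)) with (norm (axis_integral m t - F / 2)).
  eapply Rle_trans.
  - apply (norm_RInt_le (fun y => axis_integrand m (1 - y / M) / M - expint_integrand y / 2)
             (fun y => / M * ((2 + y) * exp (- y))) x M); [lra | | exact Hdiff |].
    + intros y Hy. apply axis_integrand_approx; [exact Hm | fold M; lra].
    + exact (is_RInt_scal _ _ _ (/ M) _ (is_RInt_lin_exp x M)).
  - pose proof (three_plus_mul_exp_le x ltac:(lra)).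
    pose proof (exp_pos (- M)). pose proof (Rinv_0_lt_compat M ltac:(lra)).
    change (scal (/ M) ((3 + x) * exp (- x) - (3 + M) * exp (- M)))
      with (/ M * ((3 + x) * exp (- x) - (3 + M) * exp (- M))).
    unfold Rdiv. rewrite (Rmult_comm 3). apply Rmult_le_compat_l; nra.
Qed.

Lemma axis_integral_expint_approx (m : nat) (t : R) :
  (1 <= m)%nat -> 0 < t < 1 -> 1 <= INR m * (1 - t) ->
  Rabs (axis_integral m t - expint (INR m * (1 - t)) / 2) <= 4 / INR m.
Proof.
  intros Hm Ht Hx.
  pose proof (axis_integral_sub_RInt_expint_le m t Hm Ht Hx) as Hclose.
  set (M := INR m) in *. set (x := M * (1 - t)) in *. set (F := RInt expint_integrand x M) in *.
  assert (HM : 1 <= M) by (apply (le_INR 1); lia).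
  assert (HxM : x <= M) by (unfold x; nra).
  pose proof (expint_bounds x M ltac:(lra)) as HE. fold F in HE.
  assert (HeM : exp (- M) <= / M).
  { rewrite exp_Ropp. apply Rinv_le_contravar. lra. pose proof (exp_ineq1_le M). lra. }
  replace (axis_integral m t - expint x / 2)
    with ((axis_integral m t - F / 2) - (expint x - F) / 2) by lra.
  eapply Rle_trans. apply Rabs_triang. rewrite Rabs_Ropp.
  assert (Rabs ((expint x - F) / 2) <= / M / 2).
  { unfold Rdiv. rewrite Rabs_mult, Rabs_pos_eq by lra. rewrite (Rabs_pos_eq (/ 2)) by lra.
    apply Rmult_le_compat_r; lra. }
  replace (4 / M) with (3 / M + / M) by (field; lra).
  pose proof (Rinv_0_lt_compat M ltac:(lra)). lra.
Qed.

Lemma ftilde_imag_near_i : exists K : R, exists N : nat, forall m : nat, (N <= m)%nat ->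
  forall t : R, 1 - / sqrt (INR m) <= t <= 1 - / INR m ->
    Cmod (ftilde m (iR t) - / (RtoC 2 * Ci) * RtoC (expint (INR m * (1 - t))))
      <= K * (ln (INR m) / INR m)
    /\ Cmod (ftilde m (iR t)) <= K
    /\ Cmod (ftilde m (iR (- t))) <= K.
Proof.
  exists 4, 3%nat. intros m Hm t Ht.
  assert (HM : 3 <= INR m) by (replace 3 with (INR 3) by (simpl; lra); apply le_INR; lia).
  set (M := INR m) in *.
  assert (Hsqrt : 1 < sqrt M) by (rewrite <- sqrt_1; apply sqrt_lt_1_alt; lra).
  assert (Hinv : / sqrt M < 1) by (rewrite <- Rinv_1; apply Rinv_lt_contravar; lra).
  assert (HinvM : 0 < / M) by (apply Rinv_0_lt_compat; lra).
  assert (Hx : 1 <= M * (1 - t)).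
  { replace 1 with (M * / M) at 1 by (field; lra). apply Rmult_le_compat_l; lra. }
  assert (Hln : 1 <= ln M).
  { rewrite <- (ln_exp 1). apply ln_le. apply exp_pos. pose proof exp_le_3. lra. }
  pose proof (axis_integral_expint_approx m t ltac:(lia) ltac:(lra) Hx) as Happrox.
  pose proof (expint_nonneg_le _ Hx) as HE.
  pose proof (exp_pos (- (M * (1 - t)))).
  assert (Hexp : exp (- (M * (1 - t))) <= 1).
  { pose proof (exp_increasing (- (M * (1 - t))) 0 ltac:(lra)). rewrite exp_0 in *. lra. }
  fold M in Happrox.
  set (I := axis_integral m t) in *. set (E := expint (M * (1 - t))) in *.
  assert (HI : Rabs I <= 4).
  { replace I with ((I - E / 2) + E / 2) by lra. eapply Rle_trans. apply Rabs_triang.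
    rewrite (Rabs_pos_eq (E / 2)) by lra.
    assert (4 / M <= 2) by (unfold Rdiv; apply Rmult_le_reg_r with M; [lra | field_simplify; lra]).
    lra. }
  rewrite ftilde_iR by lra. rewrite ftilde_iR, axis_integral_opp by lra. fold I.
  rewrite Ropp_involutive, !Cmod_iR, Rabs_Ropp. split; [| tauto].
  replace (iR (- I) - / (RtoC 2 * Ci) * RtoC E)%C with (iR (- (I - E / 2))).
  - rewrite Cmod_iR, Rabs_Ropp. unfold Rdiv in *. nra.
  - unfold Cminus, Cplus, Copp, Cmult, Cinv, Ci, RtoC, iR; simpl. f_equal; field.
Qed.

Theorem lemma2 :
  (* (i) *)
  (exists K : R, exists N : nat, forall m : nat, (N <= m)%nat ->
     forall z : Complex.C, Cmod z <= / 2 ->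
       Cmod (ftilde m z) <= K * (/ 2) ^ m)
  /\
  (* (ii) *)
  (exists K : R, exists N : nat, forall m : nat, (N <= m)%nat ->
     forall t : R, -1 + / sqrt (INR m) <= t <= 1 - / sqrt (INR m) ->
       Cmod (ftilde m (iR t)) <= K * (exp (- (/ 2) * sqrt (INR m)) / sqrt (INR m)))
  /\
  (* (iii) *)
  (exists K : R, exists N : nat, forall m : nat, (N <= m)%nat ->
     forall t : R, 1 - / sqrt (INR m) <= t <= 1 - / INR m ->
       Cmod (Cminus (ftilde m (iR t))
                    (Cmult (Cinv (Cmult (RtoC 2) Ci)) (RtoC (expint (INR m * (1 - t))))))
         <= K * (ln (INR m) / INR m)
       /\ Cmod (ftilde m (iR t)) <= K
       /\ Cmod (ftilde m (iR (- t))) <= K).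
Proof.
  split; [exact ftilde_small_disc | split; [exact ftilde_imag_interior | exact ftilde_imag_near_i]].
Qed.
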